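(* Let $f,g$ satisfy the standing assumptions below, fix $\hat\beta>0$, and suppose $\beta\ge\frac{2Q_gM_f}{\mu^3}$. Then for any $(x,y)\in\mathbb{R}^n\times\mathbb{R}^p$, $0\in\mathcal{D}_h(x,y)$ if and only if $0\in\hat{\mathcal{D}}_s(x,y)$.
   Context: Standing assumptions. (A1) Constants $M_f,\mu,L_g,Q_g>0$ exist such that: $f:\mathbb{R}^n\times\mathbb{R}^p\to\mathbb{R}$ is $M_f$-Lipschitz; $g$ is twice differentiable with $\nabla^2_{yy}g\succeq\mu I_p$; $\nabla g$ is $L_g$-Lipschitz; $\nabla^2_{yy}g,\nabla^2_{xy}g$ are $Q_g$-Lipschitz; $\nabla^2_{yy}g$ is continuously differentiable ($\nabla^2_{xy}g\in\mathbb{R}^{n\times p}$ has entries $\partial^2g/\partial x_i\partial y_j$). (A2) $f$ is a potential function of a conservative field $\mathcal{D}_f$ with compact convex values of norm at most $M_f$. Notation (all at $(x,y)$): $H=\nabla^2_{yy}g$; $\mathcal{A}(x,y):=y-H^{-1}\nabla_yg$; $\nabla^3_{xyy}g(x,y)[d]:=\lim_{t\to0}\frac1t(\nabla^2_{xy}g(x,y+td)-\nabla^2_{xy}g(x,y))$, $\nabla^3_{yyy}g(x,y)[d]:=\lim_{t\to0}\frac1t(\nabla^2_{yy}g(x,y+td)-\nabla^2_{yy}g(x,y))$; $J_{A,x}:=-\nabla^2_{xy}gH^{-1}+\nabla^3_{xyy}g[H^{-1}\nabla_yg]H^{-1}$, $J_{A,y}:=\nabla^3_{yyy}g[H^{-1}\nabla_yg]H^{-1}$;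 $\mathcal{D}_h(x,y):=\{(d_x+J_{A,x}d_y+\beta\nabla^2_{xy}g\nabla_yg,\ J_{A,y}d_y+\beta H\nabla_yg):(d_x,d_y)\in\mathcal{D}_f(x,\mathcal{A}(x,y))\}$; $\hat{\mathcal{D}}_s(x,y):=\{(d_x-\nabla^2_{xy}gH^{-1}d_y,\ \hat\beta\nabla_yg):(d_x,d_y)\in\mathcal{D}_f(x,\mathcal{A}(x,y))\}$. *)

From HB Require Import structures.
From mathcomp Require Import all_boot all_order all_algebra.
From mathcomp Require Import all_classical all_reals all_analysis.
Set Implicit Arguments. Unset Strict Implicit. Unset Printing Implicit Defensive.
Import Order.TTheory GRing.Theory Num.Theory.
Import numFieldNormedType.Exports.
Local Open Scope classical_set_scope.
Local Open Scope ring_scope.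

Section Defs.
Context {R : realType} {n p : nat}.

Notation Z := ('cV[R]_n * 'cV[R]_p)%type.

Definition sqnorm {m : nat} (v : 'cV[R]_m) : R := \sum_(i < m) v i 0 ^+ 2.
Definition enorm {m : nat} (v : 'cV[R]_m) : R := Num.sqrt (sqnorm v).
Definition pnorm (z : Z) : R := Num.sqrt (sqnorm z.1 + sqnorm z.2).
Definition pdot (z w : Z) : R :=
  \sum_(i < n) z.1 i 0 * w.1 i 0 + \sum_(j < p) z.2 j 0 * w.2 j 0.

Definition ex (i : 'I_n) : Z := (delta_mx i 0, 0).
Definition ey (j : 'I_p) : Z := (0, delta_mx j 0).

Definition gradx (g : Z -> R) (z : Z) : 'cV[R]_n := \col_i derive g z (ex i).
Definition grady (g : Z -> R) (z : Z) : 'cV[R]_p := \col_j derive g z (ey j).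
Definition grad (g : Z -> R) (z : Z) : Z := (gradx g z, grady g z).

Definition Hyy (g : Z -> R) (z : Z) : 'M[R]_p :=
  \matrix_(i, j) derive (fun w => derive g w (ey j)) z (ey i).
Definition Hxy (g : Z -> R) (z : Z) : 'M[R]_(n, p) :=
  \matrix_(i, j) derive (fun w => derive g w (ey j)) z (ex i).

Definition Txyy (g : Z -> R) (z : Z) (d : 'cV[R]_p) : 'M[R]_(n, p) :=
  derive (Hxy g) z (0, d).
Definition Tyyy (g : Z -> R) (z : Z) (d : 'cV[R]_p) : 'M[R]_p :=
  derive (Hyy g) z (0, d).

Definition Amap (g : Z -> R) (x : 'cV[R]_n) (y : 'cV[R]_p) : 'cV[R]_p :=
  y - invmx (Hyy g (x, y)) *m grady g (x, y).

Definition JAx (g : Z -> R) (x : 'cV[R]_n) (y : 'cV[R]_p) : 'M[R]_(n, p) :=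
  let z := (x, y) in
  let Hi := invmx (Hyy g z) in
  - (Hxy g z *m Hi) + Txyy g z (Hi *m grady g z) *m Hi.
Definition JAy (g : Z -> R) (x : 'cV[R]_n) (y : 'cV[R]_p) : 'M[R]_p :=
  let z := (x, y) in
  let Hi := invmx (Hyy g z) in
  Tyyy g z (Hi *m grady g z) *m Hi.

Definition Dh (Df : Z -> set Z) (g : Z -> R) (beta : R)
    (x : 'cV[R]_n) (y : 'cV[R]_p) : set Z :=
  [set (d.1 + JAx g x y *m d.2 + beta *: (Hxy g (x, y) *m grady g (x, y)),
        JAy g x y *m d.2 + beta *: (Hyy g (x, y) *m grady g (x, y)))
   | d in Df (x, Amap g x y)].
Definition Dhats (Df : Z -> set Z) (g : Z -> R) (betahat : R)
    (x : 'cV[R]_n) (y : 'cV[R]_p) : set Z :=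
  [set (d.1 - Hxy g (x, y) *m invmx (Hyy g (x, y)) *m d.2,
        betahat *: grady g (x, y))
   | d in Df (x, Amap g x y)].

Definition lipschitz_with (L : R) (f : Z -> R) :=
  forall z w : Z, `|f z - f w| <= L * pnorm (z - w).

Definition twice_differentiable (g : Z -> R) :=
  forall z : Z, differentiable g z /\ differentiable (grad g) z.

Definition loewner_ge (M : 'M[R]_p) (mu : R) :=
  forall v : 'cV[R]_p, mu * sqnorm v <= (v^T *m M *m v) 0 0.

Definition grad_lipschitz (L : R) (g : Z -> R) :=
  forall z w : Z, pnorm (grad g z - grad g w) <= L * pnorm (z - w).

(* Q-Lipschitz w.r.t. the operator (spectral) norm, unfolded *)
Definition op_lipschitz {m : nat} (Q : R) (M : Z -> 'M[R]_(m, p)) :=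
  forall (z w : Z) (v : 'cV[R]_p),
    enorm ((M z - M w) *m v) <= Q * pnorm (z - w) * enorm v.

Definition C1 (phi : Z -> R) :=
  (forall z : Z, differentiable phi z) /\
  (forall v : Z, continuous (fun z => derive phi z v)).
Definition C1_mx {m k : nat} (M : Z -> 'M[R]_(m, k)) :=
  forall i j, C1 (fun z => M z i j).

Definition abs_cont01 (gam : R -> Z) :=
  forall eps : R, 0 < eps -> exists2 delta : R, 0 < delta &
    forall (k : nat) (a b : nat -> R),
      0 <= a 0%N -> (k > 0)%N -> b k.-1 <= 1 ->
      (forall i, (i < k)%N -> a i <= b i) ->
      (forall i, (i.+1 < k)%N -> b i <= a i.+1) ->
      \sum_(i < k) (b i - a i) < delta ->
      \sum_(i < k) pnorm (gam (b i) - gam (a i)) < eps.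

Definition path_integrand (D : Z -> set Z) (gam : R -> Z) (t : R) : R :=
  sup [set pdot (derive1 gam t) v | v in D (gam t)].

Definition path_integral (D : Z -> set Z) (gam : R -> Z) : \bar R :=
  (\int[@lebesgue_measure R]_(t in `[0%R, 1%R]) (path_integrand D gam t)%:E)%E.

Definition conservative_field (D : Z -> set Z) :=
  closed [set zv : Z * Z | D zv.1 zv.2] /\
  (forall z, D z !=set0 /\ compact (D z)) /\
  (forall gam, abs_cont01 gam -> gam 0 = gam 1 -> path_integral D gam = 0%E).

Definition potential_of (f : Z -> R) (D : Z -> set Z) :=
  forall gam, abs_cont01 gam -> path_integral D gam = (f (gam 1) - f (gam 0))%:E.

Definition convex_values (D : Z -> set Z) :=
  forall z u v (t : R), D z u -> D z v -> 0 <= t <= 1 ->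
    D z (t *: u + (1 - t) *: v).

Definition bounded_values (M : R) (D : Z -> set Z) :=
  forall z v, D z v -> pnorm v <= M.

End Defs.

From HB Require Import structures.
From mathcomp Require Import all_boot all_order all_algebra.
From mathcomp Require Import all_classical all_reals all_analysis.
From mathcomp Require Import ring lra.
Import Order.TTheory GRing.Theory Num.Theory.
Import numFieldNormedType.Exports.
Local Open Scope classical_set_scope.
Local Open Scope ring_scope.

(* Each of [0 \in D_h(x, y)] and [0 \in hat D_s(x, y)] forces
   [G := grad_y g(x, y) = 0], and where [G = 0] the two fields coincide:
   [H^-1 G = 0] kills the third-order terms of [J_A] and both [beta] terms.
   For [hat D_s] this is immediate from [betahat > 0].  For [D_h], pair the
   second component [T[u] w + beta H G = 0] with [G], where [u = H^-1 G],
   [w = H^-1 d_y] and [T = grad^3_yyy g]: strong convexity gives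
   [mu |G|^2 <= <G, H G>], [mu |u| <= |G|] and [mu |w| <= M_f], and the
   Lipschitz Hessian gives [|T[u] w| <= Q_g |u| |w|], whence
   [beta mu^3 |G|^2 <= Q_g M_f |G|^2]; this forces [G = 0] as soon as
   [beta mu^3 >= 2 Q_g M_f]. *)

Section Euclidean.
Context {R : realType} {m : nat}.
Implicit Types (a b : 'cV[R]_m) (c : R).

Definition dotv a b : R := \sum_i a i 0 * b i 0.

Lemma dotv0l b : dotv 0 b = 0.
Proof. by rewrite /dotv big1 // => i _; rewrite mxE mul0r. Qed.

Lemma dotv0r a : dotv a 0 = 0.
Proof. by rewrite /dotv big1 // => i _; rewrite mxE mulr0. Qed.

Lemma dotvNl a b : dotv (- a) b = - dotv a b.
Proof. by rewrite /dotv -sumrN; apply: eq_bigr => i _; rewrite mxE mulNr. Qed.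

Lemma dotvDr a b b' : dotv a (b + b') = dotv a b + dotv a b'.
Proof. by rewrite /dotv -big_split; apply: eq_bigr => i _; rewrite mxE mulrDr. Qed.

Lemma dotvZr a b c : dotv a (c *: b) = c * dotv a b.
Proof. by rewrite /dotv mulr_sumr; apply: eq_bigr => i _; rewrite mxE mulrCA. Qed.

Lemma quadform_dotv (H : 'M[R]_m) a : (a^T *m H *m a) 0 0 = dotv a (H *m a).
Proof. by rewrite -mulmxA mxE /dotv; apply: eq_bigr => i _; rewrite mxE. Qed.

Lemma sqnorm_ge0 a : 0 <= sqnorm a.
Proof. by apply: sumr_ge0 => i _; exact: sqr_ge0. Qed.

Lemma sqnorm_eq0 a : sqnorm a = 0 -> a = 0.
Proof.
move=> /eqP; rewrite psumr_eq0 => [/allP a0|i _]; last exact: sqr_ge0.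
apply/matrixP => i j; rewrite (ord1 j) mxE.
by have := a0 i (mem_index_enum i); rewrite implyTb sqrf_eq0 => /eqP.
Qed.

Lemma sqnormZ a c : sqnorm (c *: a) = c ^+ 2 * sqnorm a.
Proof. by rewrite /sqnorm mulr_sumr; apply: eq_bigr => i _; rewrite mxE exprMn. Qed.

Lemma sqnorm_scaleB a b c :
  sqnorm (c *: a - b) = c ^+ 2 * sqnorm a - 2 * c * dotv a b + sqnorm b.
Proof.
rewrite /sqnorm /dotv !mulr_sumr -sumrB -big_split /=.
by apply: eq_bigr => i _; rewrite !mxE; ring.
Qed.

Lemma dotv_sqr_le a b : dotv a b ^+ 2 <= sqnorm a * sqnorm b.
Proof.
have [a0|a0] := eqVneq (sqnorm a) 0.
  by rewrite a0 (sqnorm_eq0 _ a0) dotv0l expr0n mul0r.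
have a_gt0 : 0 < sqnorm a by rewrite lt_def a0 sqnorm_ge0.
(* minimise [sqnorm (c *: a - b) >= 0] in [c] *)
have := sqnorm_ge0 ((dotv a b / sqnorm a) *: a - b).
rewrite sqnorm_scaleB.
have : dotv a b / sqnorm a * sqnorm a = dotv a b by rewrite mulfVK.
move: (dotv a b / sqnorm a) => c ca.
have := sqnorm_ge0 b; nra.
Qed.

Lemma enorm_ge0 a : 0 <= enorm a.
Proof. exact: sqrtr_ge0. Qed.

Lemma sqr_enorm a : enorm a ^+ 2 = sqnorm a.
Proof. by rewrite /enorm sqr_sqrtr // sqnorm_ge0. Qed.

Lemma enormZ a c : enorm (c *: a) = `|c| * enorm a.
Proof. by rewrite /enorm sqnormZ sqrtrM ?sqr_ge0 // sqrtr_sqr. Qed.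

Lemma enormN a : enorm (- a) = enorm a.
Proof. by rewrite -scaleN1r enormZ normrN normr1 mul1r. Qed.

Lemma dotv_le_enorm a b : dotv a b <= enorm a * enorm b.
Proof.
apply: le_trans (ler_norm _) _.
rewrite /enorm -sqrtrM ?sqnorm_ge0 // -sqrtr_sqr ler_sqrt ?mulr_ge0 ?sqnorm_ge0 //.
exact: dotv_sqr_le.
Qed.

End Euclidean.

Lemma pnormZ {R : realType} {n p : nat} (z : 'cV[R]_n * 'cV[R]_p) c :
  pnorm (c *: z) = `|c| * pnorm z.
Proof.
rewrite /pnorm; change (c *: z).1 with (c *: z.1); change (c *: z).2 with (c *: z.2).
by rewrite !sqnormZ -mulrDr sqrtrM ?sqr_ge0 // sqrtr_sqr.
Qed.

Lemma pnorm0l {R : realType} {n p : nat} (v : 'cV[R]_p) :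
  pnorm ((0 : 'cV[R]_n), v) = enorm v.
Proof.
by rewrite /pnorm /enorm /= [sqnorm 0]big1 ?add0r // => i _; rewrite mxE expr0n.
Qed.

Lemma enorm_snd_le_pnorm {R : realType} {n p : nat} (z : 'cV[R]_n * 'cV[R]_p) :
  enorm z.2 <= pnorm z.
Proof. by rewrite ler_sqrt ?addr_ge0 ?sqnorm_ge0 // lerDr sqnorm_ge0. Qed.

Section LoewnerBounds.
Context {R : realType} {m : nat} {H : 'M[R]_m} {mu : R}.
Hypotheses (mu_gt0 : 0 < mu) (H_ge : loewner_ge H mu).

Lemma loewner_dotv_ge v : mu * sqnorm v <= dotv v (H *m v).
Proof. by rewrite -quadform_dotv; exact: H_ge. Qed.

Lemma loewner_enorm_ge v : mu * enorm v <= enorm (H *m v).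
Proof.
have [v0|v0] := eqVneq (enorm v) 0; first by rewrite v0 mulr0 enorm_ge0.
have v_gt0 : 0 < enorm v by rewrite lt_def v0 enorm_ge0.
rewrite -(ler_pM2l v_gt0) mulrCA -expr2 sqr_enorm.
exact: le_trans (loewner_dotv_ge v) (dotv_le_enorm _ _).
Qed.

Lemma loewner_unitmx : H \in unitmx.
Proof.
have H_inj (v : 'cV[R]_m) : H *m v = 0 -> v = 0.
  move=> Hv; apply: sqnorm_eq0; apply/eqP; rewrite eq_le sqnorm_ge0 andbT.
  by rewrite -(pmulr_rle0 _ mu_gt0) -(dotv0r v) -Hv loewner_dotv_ge.
rewrite -unitmx_tr -row_free_unit -kermx_eq0; apply/eqP/row_matrixP => i.
rewrite row0; have : row i (kermx H^T) *m H^T = 0 by rewrite -row_mul mulmx_ker row0.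
move=> /(congr1 trmx); rewrite trmx_mul trmxK trmx0 => /H_inj /(congr1 trmx).
by rewrite trmxK trmx0.
Qed.

Lemma loewner_enorm_invmx_le v : mu * enorm (invmx H *m v) <= enorm v.
Proof.
have := loewner_enorm_ge (invmx H *m v).
by rewrite mulmxA mulmxV ?loewner_unitmx ?mul1mx.
Qed.

End LoewnerBounds.

Section LipschitzDerivative.
Context {R : realType}.

Lemma continuous_dotv_mulmx {k l : nat} (a : 'cV[R]_k) (w : 'cV[R]_l) :
  continuous (fun M : 'M[R]_(k, l) => dotv a (M *m w)).
Proof.
have -> : (fun M : 'M[R]_(k, l) => dotv a (M *m w)) =
          (fun M => \sum_i \sum_j (a i 0 * w j 0) * M i j).
  apply/funext => M; apply: eq_bigr => i _; rewrite !mxE mulr_sumr.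
  by apply: eq_bigr => j _; rewrite mulrCA mulrC.
apply: continuous_big; first exact: add_continuous.
move=> i _; apply: continuous_big; first exact: add_continuous.
move=> j _ M; apply: (@continuous_comp _ _ _ (fun M : 'M[R]_(k, l) => M i j)).
  exact: coord_continuous.
exact: mulrl_continuous.
Qed.

Lemma derive_dotv_le {V : normedModType R} {k l : nat} (M : V -> 'M[R]_(k, l))
    z v a (w : 'cV[R]_l) (K : R) :
  derivable M z v ->
  (forall h : R, h != 0 -> dotv a ((h^-1 *: (M (h *: v + z) - M z)) *m w) <= K) ->
  dotv a ('D_v M z *m w) <= K.
Proof.
move=> dM quotient_le.
have quotient_cvg : (fun h : R => h^-1 *: ((M \o shift z) (h *: v) - M z))
  @ 0^' --> 'D_v M z := dM.
have dotv_cvg := @continuous_cvg _ _ _ _ _ _ _ _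
  (continuous_dotv_mulmx a w ('D_v M z)) quotient_cvg.
apply: (ler_cvg_to (dotv_cvg _) (cvg_cst K)).
near=> h; apply: quotient_le; near: h; exact: nbhs_dnbhs_neq.
Unshelve. all: by end_near.
Qed.

Lemma op_lipschitz_derive_dotv_le {n p k : nat} (Q : R)
    (M : 'cV[R]_n * 'cV[R]_p -> 'M[R]_(k, p)) z v a w :
  op_lipschitz Q M -> derivable M z v ->
  dotv a ('D_v M z *m w) <= enorm a * (Q * pnorm v * enorm w).
Proof.
move=> M_lip dM; apply: derive_dotv_le dM _ => h h0.
apply: le_trans (dotv_le_enorm _ _) _; apply: ler_wpM2l; first exact: enorm_ge0.
rewrite -scalemxAl enormZ normfV.
have := M_lip (h *: v + z) z w; rewrite addrK pnormZ => lip.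
have inv_ge0 : 0 <= `|h|^-1 by rewrite invr_ge0.
apply: le_trans (ler_wpM2l inv_ge0 lip) _.
have h_neq0 : `|h| != 0 by rewrite normr_eq0.
by rewrite [leLHS](_ : _ = Q * pnorm v * enorm w) //; field.
Qed.

End LipschitzDerivative.

Lemma quadratic_balance_eq0 {R : realFieldType} {mu Q M beta x u w : R} :
  0 < mu -> 0 < Q -> 0 < M -> 2 * Q * M <= beta * mu ^+ 3 ->
  0 <= x -> 0 <= u -> 0 <= w -> mu * u <= x -> mu * w <= M ->
  beta * (mu * x ^+ 2) <= x * (Q * u * w) -> x = 0.
Proof.
move=> mu0 Q0 M0 hbeta x0 u0 w0 hu hw hx.
have huw : (mu * u) * (mu * w) <= x * M.
  by apply: ler_pM => //; apply: mulr_ge0 => //; exact: ltW.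
have hxM : beta * mu ^+ 3 * x ^+ 2 <= Q * M * x ^+ 2.
  have -> : beta * mu ^+ 3 * x ^+ 2 = mu ^+ 2 * (beta * (mu * x ^+ 2)) by ring.
  apply: le_trans (ler_wpM2l (sqr_ge0 mu) hx) _.
  have -> : mu ^+ 2 * (x * (Q * u * w)) = Q * x * ((mu * u) * (mu * w)) by ring.
  have -> : Q * M * x ^+ 2 = Q * x * (x * M) by ring.
  by apply: ler_wpM2l => //; apply: mulr_ge0 => //; exact: ltW.
have : Q * M * x ^+ 2 <= 0 by nra.
rewrite pmulr_rle0 ?mulr_gt0 // => x2_le0.
by apply/eqP; rewrite -sqrf_eq0 eq_le x2_le0 sqr_ge0.
Qed.

Lemma loewner_balance_eq0 {R : realType} {m : nat} {H T : 'M[R]_m}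
    {G d : 'cV[R]_m} {mu Q M beta : R} :
  0 < mu -> 0 < Q -> 0 < M -> loewner_ge H mu -> 2 * Q * M / mu ^+ 3 <= beta ->
  enorm d <= M ->
  (forall a w, dotv a (T *m w) <= enorm a * (Q * enorm (invmx H *m G) * enorm w)) ->
  T *m (invmx H *m d) + beta *: (H *m G) = 0 -> G = 0.
Proof.
move=> mu0 Q0 M0 H_ge hbeta dM T_le balance.
have beta0 : 0 <= beta.
  by apply: le_trans hbeta; rewrite ltW // divr_gt0 ?exprn_gt0 // !mulr_gt0.
have hbeta' : 2 * Q * M <= beta * mu ^+ 3 by rewrite -ler_pdivrMr ?exprn_gt0.
have paired : beta * dotv G (H *m G) = dotv (- G) (T *m (invmx H *m d)).
  by have := congr1 (dotv G) balance; rewrite dotvDr dotvZr dotv0r dotvNl; lra.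
apply: sqnorm_eq0; rewrite -sqr_enorm; apply/eqP; rewrite sqrf_eq0; apply/eqP.
apply: (quadratic_balance_eq0 mu0 Q0 M0 hbeta' (enorm_ge0 G) (enorm_ge0 _)
  (enorm_ge0 _) (loewner_enorm_invmx_le mu0 H_ge G)
  (le_trans (loewner_enorm_invmx_le mu0 H_ge d) dM)).
rewrite sqr_enorm -(enormN G); apply: le_trans (T_le _ _); rewrite -paired.
by apply: ler_wpM2l => //; exact: loewner_dotv_ge.
Qed.

Section StationaryPoints.
Context {R : realType} {n p : nat}.
Implicit Types (g : 'cV[R]_n * 'cV[R]_p -> R)
  (Df : 'cV[R]_n * 'cV[R]_p -> set ('cV[R]_n * 'cV[R]_p)).

Lemma Dh_eq_Dhats {Df g} {beta betahat : R} {x y} : grady g (x, y) = 0 ->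
  Dh Df g beta x y = Dhats Df g betahat x y.
Proof.
move=> G0; rewrite /Dh /Dhats /JAx /JAy /Txyy /Tyyy /= G0 !mulmx0 !derive0.
apply: eq_imagel => d _.
by rewrite !mul0mx !scaler0 !addr0 mulNmx.
Qed.

Lemma Dhats0_grady_eq0 {Df g} {betahat : R} {x y} :
  betahat != 0 -> Dhats Df g betahat x y 0 -> grady g (x, y) = 0.
Proof. by move=> bh0 [d _ [_ /eqP]]; rewrite scaler_eq0 (negPf bh0) => /eqP. Qed.

Lemma Dh0_grady_eq0 {Df g} {Mf mu Qg beta : R} {x y} :
  0 < Mf -> 0 < mu -> 0 < Qg -> loewner_ge (Hyy g (x, y)) mu ->
  op_lipschitz Qg (Hyy g) -> C1_mx (Hyy g) -> bounded_values Mf Df ->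
  2 * Qg * Mf / mu ^+ 3 <= beta ->
  Dh Df g beta x y 0 -> grady g (x, y) = 0.
Proof.
move=> Mf0 mu0 Qg0 H_ge Hyy_lip Hyy_C1 Df_bd hbeta [d Dd [_ balance]].
rewrite /JAy /= -mulmxA in balance.
apply: (loewner_balance_eq0 mu0 Qg0 Mf0 H_ge hbeta _ _ balance).
  exact: le_trans (enorm_snd_le_pnorm d) (Df_bd _ _ Dd).
move=> a w; rewrite /Tyyy -[enorm (invmx _ *m _)](pnorm0l (n := n)).
apply: op_lipschitz_derive_dotv_le => //.
by apply/derivable_mxP => i j; apply: diff_derivable; exact: (Hyy_C1 i j).1.
Qed.

End StationaryPoints.

Theorem proposition4p5 (R : realType) (n p : nat)
    (f g : 'cV[R]_n * 'cV[R]_p -> R)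
    (Df : 'cV[R]_n * 'cV[R]_p -> set ('cV[R]_n * 'cV[R]_p))
    (Mf mu Lg Qg beta betahat : R) :
  (* (A1) *)
  0 < Mf -> 0 < mu -> 0 < Lg -> 0 < Qg ->
  lipschitz_with Mf f ->
  twice_differentiable g ->
  (forall z, loewner_ge (Hyy g z) mu) ->
  grad_lipschitz Lg g ->
  op_lipschitz Qg (Hyy g) ->
  op_lipschitz Qg (Hxy g) ->
  C1_mx (Hyy g) ->
  (* (A2) *)
  conservative_field Df ->
  potential_of f Df ->
  convex_values Df ->
  bounded_values Mf Df ->
  (* parameters *)
  0 < betahat ->
  2 * Qg * Mf / mu ^+ 3 <= beta ->
  forall (x : 'cV[R]_n) (y : 'cV[R]_p),
    Dh Df g beta x y 0 <-> Dhats Df g betahat x y 0.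
Proof.
move=> Mf0 mu0 _ Qg0 _ _ H_ge _ Hyy_lip _ Hyy_C1 _ _ _ Df_bd betahat0 hbeta x y.
split=> [Dh0 | Dhats0].
- have G0 := Dh0_grady_eq0 Mf0 mu0 Qg0 (H_ge _) Hyy_lip Hyy_C1 Df_bd hbeta Dh0.
  by rewrite -(Dh_eq_Dhats (beta := beta) G0).
- have G0 := Dhats0_grady_eq0 (lt0r_neq0 betahat0) Dhats0.
  by rewrite (Dh_eq_Dhats (betahat := betahat) G0).
Qed.
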